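(* In the setting described in the context, suppose $n\in\mathbb{N}$, $\omega,\upsilon\in\mathcal{P}_n$, $y\in T^n\omega\cap T^n\upsilon$, and $\mathcal{D}^n(\ell_\omega y)\mathcal{K}\pitchfork\mathcal{D}^n(\ell_\upsilon y)\mathcal{K}$. Then there exists a $1$-dimensional linear subspace $L\subset\mathbb{R}^d$ such that for all $v\in L\setminus\{0\}$, \[ |D(\tau_n\circ\ell_\omega)(y)v-D(\tau_n\circ\ell_\upsilon)(y)v|>C_5\big(|D\ell_\omega(y)v|+|D\ell_\upsilon(y)v|\big). \]
   Context: $X$ is a compact open subset of $\mathbb{R}^d$ (as in the paper). $T:X\to X$: finite partition $\mathcal{P}$ of a full-measure subset into connected open sets, $T|_\omega$ a $\mathcal{C}^1$ diffeomorphism onto $T\omega$ for $\omega\in\mathcal{P}$; $\|(DT^n(x))^{-1}\|\le e^{-\lambda n}$ (some $\lambda>0$). $\tau:X\to(0,\infty)$ is $\mathcal{C}^{1+\alpha}$ with $\|D\tau(x)(DT(x))^{-1}\|\le C_3$ for $x\in\omega\in\mathcal{P}$; $C_5=2C_3/(1-e^{-\lambda})$. $\mathcal{P}_n$ is the $n$-th refinement of $\mathcal{P}$; for $\omega\in\mathcal{P}_n$, $\ell_\omega=(T^n|_\omega)^{-1}:T^n\omega\to\omega$. $\tau_n=\sum_{j=0}^{n-1}\tau\circ T^j$. $\mathcal{D}^n(x)=\begin{pmatrix}DT^n(x)&0\\ D\tau_n(x)&1\end{pmatrix}$ acting on $\mathbb{R}^{d+1}$; $\mathcal{K}=\{(a,b):a\in\mathbb{R}^d,b\in\mathbb{R},|b|\le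 C_5|a|\}$. For $x_1,x_2$ with $T^nx_1=T^nx_2$, $\mathcal{D}^n(x_1)\mathcal{K}\pitchfork\mathcal{D}^n(x_2)\mathcal{K}$ means that $\mathcal{D}^n(x_1)\mathcal{K}\cap\mathcal{D}^n(x_2)\mathcal{K}$ contains no $d$-dimensional linear subspace. *)

From HB Require Import structures.
From mathcomp Require Import all_boot all_order all_algebra.
From mathcomp Require Import all_classical all_reals all_analysis.
Set Implicit Arguments. Unset Strict Implicit. Unset Printing Implicit Defensive.
Import Order.TTheory GRing.Theory Num.Theory.
Import numFieldNormedType.Exports.
Local Open Scope classical_set_scope.
Local Open Scope ring_scope.

Section Defs.
Variables (R : realType) (d : nat).
Notation V := 'rV[R]_d.

Definition enorm (v : V) : R := Num.sqrt (\sum_(i < d) v 0 i ^+ 2).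

(* Jacobian matrix of f at x in the row-vector convention: v *m jac f x = Df(x) v. *)
Definition jac (f : V -> V) (x : V) : 'M[R]_d := lin1_mx ('d f x).

Definition box (a b : V) : set V := [set x | forall i, a 0 i <= x 0 i <= b 0 i].
Definition boxvol (a b : V) : R := \prod_(i < d) (b 0 i - a 0 i).
Definition lebesgue_null (A : set V) : Prop :=
  forall eps : R, 0 < eps -> exists a b : nat -> V,
    (forall k i, a k 0 i <= b k 0 i) /\
    A `<=` \bigcup_k box (a k) (b k) /\
    forall N, \sum_(k < N) boxvol (a k) (b k) <= eps.

(* C^1 on a set U: differentiable at each point of U, derivative continuous on U
   (continuity of each directional derivative x |-> Df(x) v, i.e. continuity of Df
   in the (finite-dimensional) operator topology). *)
Definition C1on (W : normedModType R) (U : set V) (f : V -> W) : Prop :=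
  (forall x, U x -> differentiable f x) /\
  (forall v x, U x -> {for x, continuous (fun z => 'd f z v)}).

(* The n-th refinement of the partition: the element of P_n with itinerary w. *)
Definition cyl (I : finType) (P : I -> set V) (T : V -> V) (n : nat)
  (w : 'I_n -> I) : set V :=
  [set x | forall j : 'I_n, P (w j) (iter j T x)].

Definition birk (T : V -> V) (tau : V -> R) (n : nat) (x : V) : R :=
  \sum_(j < n) tau (iter j T x).

(* The matrix D^n(x) = [[DT^n(x), 0], [Dtau_n(x), 1]] acting on
   R^{d+1} = R^d x R, written as the map (a, b) |-> (DT^n(x) a, Dtau_n(x) a + b). *)
Definition Dn (T : V -> V) (tau : V -> R) (n : nat) (x : V)
  (w : 'rV[R]_(d + 1)) : 'rV[R]_(d + 1) :=
  row_mx ('d (iter n T) x (lsubmx w))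
         (('d (birk T tau n) x (lsubmx w) + rsubmx w 0 0)%:M).

Definition cone (C5 : R) : set 'rV[R]_(d + 1) :=
  [set w | `|rsubmx w 0 0| <= C5 * enorm (lsubmx w)].

Definition transverse (T : V -> V) (tau : V -> R) (n : nat) (C5 : R)
  (x1 x2 : V) : Prop :=
  ~ exists S : {vspace 'rV[R]_(d + 1)}, (\dim S = d)%N /\
      forall w, w \in S ->
        (Dn T tau n x1 @` cone C5) w /\ (Dn T tau n x2 @` cone C5) w.

Definition setting (X : set V) (T : V -> V) (tau : V -> R) (lam alpha C3 : R)
  (I : finType) (P : I -> set V) : Prop :=
  [/\ compact X /\ (forall x, X x -> X (T x)),
      [/\ (forall i, open (P i) /\ connected (P i) /\ P i `<=` X),
          (forall i j, i != j -> P i `&` P j = set0)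
        & lebesgue_null (X `\` \bigcup_(i in [set: I]) P i)],
      (forall i, [/\ open (T @` P i), ({in P i &, injective T}), C1on (P i) T
         & exists g : V -> V, (forall x, P i x -> g (T x) = x) /\
                              C1on (T @` P i) g])
    &
      (0 < lam /\
      forall n (w : 'I_n -> I) x, cyl P T w x -> forall u : V,
         enorm (u *m invmx (jac (iter n T) x)) <= expR (- (lam * n%:R))  * enorm u)] /\
  [/\ 0 < alpha <= 1, (forall x, X x -> 0 < tau x),
          (forall x, X x -> differentiable tau x)
        & (exists CH : R, forall x y, X x -> X y -> forall v : V,
            `|'d tau x v - 'd tau y v| <= CH * (enorm (x - y)) `^ alpha * enorm v)] /\
      (forall i x, P i x -> forall u : V,
        `|'d tau x (u *m invmx (jac T x))| <= C3 * enorm u).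

End Defs.

From HB Require Import structures.
From mathcomp Require Import all_boot all_order all_algebra.
From mathcomp Require Import all_classical all_reals all_analysis.
From mathcomp Require Import ring lra.
Set Implicit Arguments. Unset Strict Implicit. Unset Printing Implicit Defensive.
Import Order.TTheory GRing.Theory Num.Theory.
Import numFieldNormedType.Exports.
Local Open Scope classical_set_scope.
Local Open Scope ring_scope.

(* If no line works, then |D(tau_n o l_om) v - D(tau_n o l_up) v| is bounded by
   C5 (|D l_om v| + |D l_up v|) for every v, since both sides are absolutely
   homogeneous.  A finite-dimensional Hahn-Banach sandwich argument then gives a
   linear form phi within C5 |D l_om v| of D(tau_n o l_om) v and within
   C5 |D l_up v| of D(tau_n o l_up) v.  Its graph {(v, phi v)} is a d-dimensional
   subspace of both D^n(l_om y) K and D^n(l_up y) K, since D^n(l y) maps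
   (D l(y) v, b) to (v, D(tau_n o l) v + b): this contradicts transversality.
   That last identity needs l differentiable at y with DT^n(l y) D l(y) = id;
   it holds because near y the branch l agrees with the composite of the local
   inverses of T on the elements of P, whose images are open. *)

Section EuclideanNorm.
Variables (R : realType) (d : nat).
Implicit Types (u v : 'rV[R]_d) (k : R).

Let sqnorm u := \sum_(i < d) u 0 i ^+ 2.
Let dot u v := \sum_(i < d) u 0 i * v 0 i.

Let sqnorm_ge0 u : 0 <= sqnorm u.
Proof. by apply: sumr_ge0 => i _; exact: sqr_ge0. Qed.

Let sqnorm_eq0 u : sqnorm u = 0 -> u = 0.
Proof.
move/eqP; rewrite psumr_eq0 => [/allP u0|i _]; last exact: sqr_ge0.
apply/rowP => i; rewrite mxE; apply/eqP; rewrite -sqrf_eq0.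
by apply: u0; rewrite mem_index_enum.
Qed.

Let sqnormD u v : sqnorm (u + v) = sqnorm u + 2 * dot u v + sqnorm v.
Proof.
rewrite /sqnorm /dot mulr_sumr -!big_split /=.
by apply: eq_bigr => i _; rewrite mxE; ring.
Qed.

Let sqnormZ k u : sqnorm (k *: u) = k ^+ 2 * sqnorm u.
Proof. by rewrite /sqnorm mulr_sumr; apply: eq_bigr => i _; rewrite mxE exprMn. Qed.

Let dotZr k u v : dot u (k *: v) = k * dot u v.
Proof. by rewrite /dot mulr_sumr; apply: eq_bigr => i _; rewrite mxE; ring. Qed.

Let cauchy_schwarz u v : dot u v ^+ 2 <= sqnorm u * sqnorm v.
Proof.
have [/sqnorm_eq0 ->|v0] := eqVneq (sqnorm v) 0.
  rewrite /dot big1 => [|i _]; last by rewrite mxE mulr0.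
  by rewrite expr0n mulr_ge0 ?sqnorm_ge0.
have vpos : 0 < sqnorm v by rewrite lt0r v0 sqnorm_ge0.
(* minimise the quadratic [t |-> sqnorm (u - t v)] at [t = dot u v / sqnorm v] *)
have := sqnorm_ge0 (u + (- (dot u v / sqnorm v)) *: v).
rewrite sqnormD sqnormZ dotZr => H.
rewrite -subr_ge0; have := mulr_ge0 H (ltW vpos).
by congr (_ <= _); field.
Qed.

Lemma enorm_ge0 u : 0 <= enorm u.
Proof. exact: sqrtr_ge0. Qed.

Lemma enorm_eq0 u : enorm u = 0 -> u = 0.
Proof.
move/eqP; rewrite sqrtr_eq0 => u0; apply: sqnorm_eq0.
by apply/le_anti; rewrite u0 sqnorm_ge0.
Qed.

Lemma enormZ k u : enorm (k *: u) = `|k| * enorm u.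
Proof. by rewrite /enorm -/(sqnorm _) sqnormZ sqrtrM ?sqr_ge0 // sqrtr_sqr. Qed.

Lemma enorm0 : enorm (0 : 'rV[R]_d) = 0.
Proof. by rewrite -(scale0r 0) enormZ normr0 mul0r. Qed.

Lemma enormD u v : enorm (u + v) <= enorm u + enorm v.
Proof.
have sqK w : enorm w ^+ 2 = sqnorm w by rewrite sqr_sqrtr ?sqnorm_ge0.
rewrite -(ler_pXn2r (_ : 0 < 2)%N) ?nnegrE ?addr_ge0 ?enorm_ge0 //.
rewrite sqrrD !sqK sqnormD lerD2r lerD2l mulr2n.
suff : dot u v <= enorm u * enorm v by lra.
have : dot u v ^+ 2 <= (enorm u * enorm v) ^+ 2 by rewrite exprMn !sqK cauchy_schwarz.
rewrite -real_normK ?num_real // ler_pXn2r ?nnegrE ?mulr_ge0 ?enorm_ge0 //.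
exact: le_trans (ler_norm _).
Qed.

End EuclideanNorm.

Section LinearForm.
Variables (R : realType) (m : nat).
Implicit Types (c : 'cV[R]_m) (u v : 'rV[R]_m).

Definition lform c u : R := (u *m c) 0 0.

Lemma lformDl c1 c2 u : lform (c1 + c2) u = lform c1 u + lform c2 u.
Proof. by rewrite /lform mulmxDr mxE. Qed.

Lemma lformDr c u v : lform c (u + v) = lform c u + lform c v.
Proof. by rewrite /lform mulmxDl mxE. Qed.

Lemma lformZr c a u : lform c (a *: u) = a * lform c u.
Proof. by rewrite /lform -scalemxAl mxE. Qed.

Lemma lformNr c u : lform c (- u) = - lform c u.
Proof. by rewrite -scaleN1r lformZr mulN1r. Qed.

Lemma lformr0 c : lform c 0 = 0.
Proof. by rewrite /lform mul0mx mxE. Qed.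

Lemma lform_of_linear (G : {linear 'rV[R]_m -> R^o}) :
  exists c, forall u, G u = lform c u.
Proof.
exists (\col_i G (delta_mx 0 i)) => u.
rewrite {1}(row_sum_delta u) linear_sum /lform mxE; apply: eq_bigr => i _.
by rewrite linearZ mxE.
Qed.

End LinearForm.

Section HahnBanach.
Variables (R : realType) (m : nat) (q : 'rV[R]_m -> R).
Hypotheses (qD : forall u v, q (u + v) <= q u + q v)
  (qZ : forall a u, 0 < a -> q (a *: u) = a * q u).

Definition supported_below (k : nat) (u : 'rV[R]_m) :=
  forall i : 'I_m, (k <= i)%N -> u 0 i = 0.

Definition dominated_below k c :=
  forall u, supported_below k u -> lform c u <= q u.

Lemma dominated_below0 c : dominated_below 0 c.
Proof.
move=> u u0; have -> : u = 0 by apply/rowP => i; rewrite u0 // mxE.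
have q0 : q 0 = 2 * q 0 by rewrite -qZ // scaler0.
by rewrite lformr0; lra.
Qed.

Lemma dominated_belowS k (km : (k < m)%N) c :
  dominated_below k c -> exists c', dominated_below k.+1 c'.
Proof.
move=> dom; pose kk := Ordinal km; pose e : 'rV[R]_m := delta_mx 0 kk.
have suppD v w : supported_below k v -> supported_below k w ->
    supported_below k (v + w).
  by move=> v0 w0 i ki; rewrite mxE v0 ?w0 ?addr0.
pose S := [set lform c v - q (v - e) | v in supported_below k].
have S_ub w : supported_below k w -> ubound S (q (w + e) - lform c w).
  move=> w0 _ [v v0 <-].
  have := dom _ (suppD _ _ v0 w0); have := qD (v - e) (w + e).
  by rewrite addrACA addNr addr0 lformDr; lra.
have supp0 : supported_below k 0 by move=> i; rewrite mxE.
have S_ne : S !=set0 by exists (lform c 0 - q (0 - e)), 0.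
have S_sup : has_sup S by split=> //; exists (q (0 + e) - lform c 0); exact: S_ub.
(* any value between [sup S] and the bounds [S_ub] extends the form along [e] *)
pose t := sup S.
have t_ge v : supported_below k v -> lform c v - q (v - e) <= t.
  by move=> v0; apply: sup_upper_bound => //; exists v.
have t_le w : supported_below k w -> t <= q (w + e) - lform c w.
  by move=> w0; apply: ge_sup => //; exact: S_ub.
exists (c + (t - c kk 0) *: delta_mx kk 0) => u u0; set c' := c + _.
pose s := u 0 kk; pose v := u - s *: e.
have v0 : supported_below k v.
  move=> i ki; rewrite !mxE /s.
  have [->|ik] := eqVneq i kk; first by rewrite eqxx mulr1 subrr.
  rewrite mulr0 subr0 u0 // ltn_neqAle ki andbT eq_sym.
  by apply: contra ik => /eqP ik; apply/eqP/val_inj.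
have uE : u = v + s *: e by rewrite subrK.
have -> : lform c' u = lform c v + s * t.
  rewrite lformDl {1}uE lformDr lformZr /lform -scalemxAr -colE /e -rowE !mxE /s.
  by ring.
have [slt0|sgt0|s0] := ltgtP s 0; last by rewrite s0 mul0r addr0 uE s0 scale0r addr0 dom.
- have /t_ge : supported_below k ((- s)^-1 *: v) by move=> i ki; rewrite mxE v0 ?mulr0.
  have -> : (- s)^-1 *: v - e = (- s)^-1 *: u.
    by rewrite uE; apply/rowP => i; rewrite !mxE; field; rewrite ?oppr_eq0 (lt_eqF slt0).
  rewrite lformZr qZ ?invr_gt0 ?oppr_gt0 // -mulrBr ler_pdivrMl ?oppr_gt0 //; lra.
- have /t_le : supported_below k (s^-1 *: v) by move=> i ki; rewrite mxE v0 ?mulr0.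
  have -> : s^-1 *: v + e = s^-1 *: u.
    by rewrite uE; apply/rowP => i; rewrite !mxE; field; rewrite (gt_eqF sgt0).
  rewrite lformZr qZ ?invr_gt0 // -mulrBr ler_pdivlMl //; lra.
Qed.

Lemma hahn_banach : exists c, forall u, lform c u <= q u.
Proof.
suff /(_ m (leqnn m)) [c dom] : forall k, (k <= m)%N -> exists c, dominated_below k c.
  by exists c => u; apply: dom => i; rewrite leqNgt ltn_ord.
elim=> [|k IH] km; first by exists 0; exact: dominated_below0.
by have [c /(dominated_belowS km)] := IH (ltnW km).
Qed.

End HahnBanach.

Section Sandwich.
Variables (R : realType) (m : nat) (p1 p2 : 'rV[R]_m -> R) (g1 g2 : 'cV[R]_m).
Hypotheses (p1D : forall u v, p1 (u + v) <= p1 u + p1 v)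
  (p1Z : forall a u, p1 (a *: u) = `|a| * p1 u)
  (p2D : forall u v, p2 (u + v) <= p2 u + p2 v)
  (p2Z : forall a u, p2 (a *: u) = `|a| * p2 u)
  (g12 : forall u, `|lform g1 u - lform g2 u| <= p1 u + p2 u).

Let seminormN (p : 'rV[R]_m -> R) : (forall a u, p (a *: u) = `|a| * p u) ->
  forall u, p (- u) = p u.
Proof. by move=> pZ u; rewrite -scaleN1r pZ normrN normr1 mul1r. Qed.

Let seminorm0 (p : 'rV[R]_m -> R) : (forall a u, p (a *: u) = `|a| * p u) -> p 0 = 0.
Proof. by move=> pZ; rewrite -(scale0r 0) pZ normr0 mul0r. Qed.

Let delta u := lform g2 u - lform g1 u.

Let deltaD u v : delta (u + v) = delta u + delta v.
Proof. by rewrite /delta !lformDr; ring. Qed.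

Let deltaZ a u : delta (a *: u) = a * delta u.
Proof. by rewrite /delta !lformZr; ring. Qed.

(* the infimal convolution of [p1] and [delta + p2] *)
Let Q u b := p1 (u - b) + delta b + p2 b.
Let q u := inf (range (Q u)).

Let Q_ge u b : - p1 u <= Q u b.
Proof.
have := g12 b; have := p1D (b - u) u; rewrite subrK -opprB seminormN /delta //.
by move: (ler_norm (lform g1 b - lform g2 b)); rewrite /Q /delta; lra.
Qed.

Let q_le u b : q u <= Q u b.
Proof. by apply: ge_inf; [exists (- p1 u) => _ [b' _ <-]; exact: Q_ge | exists b]. Qed.

Let le_q u x : (forall b, x <= Q u b) -> x <= q u.
Proof. by move=> xQ; apply: lb_le_inf; [exists (Q u 0), 0 | move=> _ [b _ <-]]. Qed.

Let qD u v : q (u + v) <= q u + q v.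
Proof.
rewrite -lerBlDr; apply: (@le_q u) => b'.
rewrite lerBlDr -lerBlDl; apply: (@le_q v) => b.
rewrite lerBlDl; apply: le_trans (q_le _ (b' + b)) _.
have := p1D (u - b') (v - b); have := p2D b' b.
by rewrite /Q deltaD opprD addrACA; lra.
Qed.

Let QZ a u b : 0 < a -> Q (a *: u) (a *: b) = a * Q u b.
Proof.
by move=> a0; rewrite /Q -scalerBr p1Z p2Z deltaZ gtr0_norm //; ring.
Qed.

Let qZ a u : 0 < a -> q (a *: u) = a * q u.
Proof.
move=> a0; apply/le_anti/andP; split.
  rewrite -ler_pdivrMl //; apply: (@le_q u) => b.
  by rewrite ler_pdivrMl // -QZ // q_le.
apply: (@le_q (a *: u)) => b.
by rewrite -[b](scalerKV (lt0r_neq0 a0)) QZ // ler_pM2l // q_le.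
Qed.

Lemma sandwich : exists c, forall u,
  `|lform c u - lform g1 u| <= p1 u /\ `|lform c u - lform g2 u| <= p2 u.
Proof.
have [c cq] := hahn_banach qD qZ.
have le_p1 u : lform c u <= p1 u.
  apply: le_trans (cq u) (le_trans (q_le u 0) _).
  by rewrite /Q subr0 /delta !lformr0 subr0 (seminorm0 p2Z) !addr0.
have le_p2 u : lform c u <= delta u + p2 u.
  apply: le_trans (cq u) (le_trans (q_le u u) _).
  by rewrite /Q subrr (seminorm0 p1Z) add0r.
exists (g1 + c) => u; rewrite lformDl addrAC subrr add0r.
have := le_p1 u; have := le_p1 (- u); have := le_p2 u; have := le_p2 (- u).
rewrite /delta !lformNr !seminormN //.
by split; rewrite ler_norml; apply/andP; split; lra.
Qed.

End Sandwich.

Section NearEqDiff.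
Variables (R : realType) (V W : normedModType R).

Lemma near0_differentiable (h : V -> W) (x : V) :
  (\forall z \near x, h z = 0) -> differentiable h x /\ 'd h x = 0 :> (V -> W).
Proof.
move=> h0; have hx : h x = 0 by exact: nbhs_singleton h0.
have c0 : continuous (\0 : {linear V -> W}) by exact: (@cst_continuous _ _ (0 : W)).
have hsh : h \o shift x = cst (h x) + (\0 : {linear V -> W}) +o_ 0 id.
  apply/eqaddoP => eps eps0; move/nbhs0P: h0 => h0.
  near=> z; rewrite !fctE /cst /= hx.
  have -> : h (z + x) = 0 by rewrite addrC; near: z.
  by rewrite addr0 subr0 normr0 mulr_ge0 // ltW.
have dh := diff_unique c0 hsh.
by split => //; apply/diff_locallyP; rewrite dh.
Unshelve. all: by end_near. Qed.

Lemma near_eq_differentiable (f g : V -> W) (x : V) :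
  differentiable f x -> (\forall z \near x, g z = f z) ->
  differentiable g x /\ 'd g x = 'd f x :> (V -> W).
Proof.
move=> df gf.
have [dgf dgf0] : differentiable (g - f) x /\ 'd (g - f) x = 0 :> (V -> W).
  apply: near0_differentiable; near=> z.
  by rewrite !fctE; apply/eqP; rewrite subr_eq0; apply/eqP; near: z.
have -> : g = f + (g - f) by rewrite addrC subrK.
split; first exact: differentiableD.
apply/funext => v; have dv := congr1 (fun h => h v) (diffD df dgf).
have d0 := congr1 (fun h => h v) dgf0.
exact: etrans dv (etrans (congr1 (+%R ('d f x v)) d0) (addr0 _)).
Unshelve. all: by end_near. Qed.

End NearEqDiff.

Lemma open_setI_preimage (S U : topologicalType) (h : S -> U) (A : set S) (B : set U) :
  open A -> open B -> {in A, continuous h} -> open (A `&` h @^-1` B).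
Proof.
rewrite !openE => oA oB hc x [Ax Bhx]; apply: filterI; first exact: oA.
by apply: (hc x); [rewrite inE | exact: oB].
Qed.

Section InverseBranch.
Variables (R : realType) (V : normedModType R).
Implicit Types (F T g h l : V -> V) (A B : set V).

Definition inverse_branch F A g :=
  [/\ open (F @` A), (forall x, A x -> g (F x) = x)
    & (forall z, (F @` A) z -> differentiable g z)].

Lemma inverse_branch_id : inverse_branch id setT id.
Proof. by split=> [|//|z _]; [rewrite image_id; exact: openT | exact: ex_diff]. Qed.

Lemma inverse_branch_comp F T A B g h :
  inverse_branch T A g -> inverse_branch F B h ->
  inverse_branch (F \o T) (A `&` T @^-1` B) (g \o h).
Proof.
move=> [oTA gK dg] [oFB hK dh].
have imE : (F \o T) @` (A `&` T @^-1` B) = F @` B `&` h @^-1` (T @` A).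
  apply/seteqP; split => [_ [x [Ax Bx] <-]|z [[b Bb <-]]].
    by split; [exists (T x) | rewrite /= hK //; exists x].
  rewrite /= hK // => -[a Aa Tab].
  by exists a; [split; rewrite //= Tab | rewrite /= Tab].
split; rewrite ?imE.
- apply: open_setI_preimage => // z; rewrite inE => FBz.
  exact: differentiable_continuous (dh z FBz).
- by move=> x [Ax Bx]; rewrite /= hK // gK.
- by move=> z [FBz TAhz]; apply: differentiable_comp; [exact: dh | exact: dg].
Qed.

Lemma inverse_branch_section F A h l y :
  inverse_branch F A h -> (forall z, (F @` A) z -> A (l z) /\ F (l z) = z) ->
  (F @` A) y -> differentiable F (l y) ->
  differentiable l y /\ forall u, 'd F (l y) ('d l y u) = u.
Proof.
move=> [oFA hK dh] lK FAy dF.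
have near_FA : \forall z \near y, (F @` A) z by rewrite openE in oFA; exact: oFA.
have [dl _] : differentiable l y /\ 'd l y = 'd h y :> (V -> V).
  apply: near_eq_differentiable; first exact: dh.
  by apply: filterS near_FA => z /lK[Alz Flz]; rewrite -[in RHS]Flz hK.
have [_ dFl] : differentiable id y /\ 'd id y = 'd (F \o l) y :> (V -> V).
  apply: near_eq_differentiable; first exact: differentiable_comp.
  by apply: filterS near_FA => z /lK[_ Flz].
split=> // u; have dFlu := congr1 (fun f => f u) dFl.
have dFu := congr1 (fun f => f u) (diff_comp dl dF).
exact: etrans (esym dFu) (etrans (esym dFlu) (congr1 (fun f => f u) diff_val)).
Qed.

End InverseBranch.

Section Cylinders.
Variables (R : realType) (d : nat) (I : finType) (P : I -> set 'rV[R]_d).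
Variable T : 'rV[R]_d -> 'rV[R]_d.

Lemma cyl0 (w : 'I_0 -> I) : cyl P T w = setT.
Proof. by apply/seteqP; split => // x _ []. Qed.

Lemma cylS n (w : 'I_n.+1 -> I) :
  cyl P T w = P (w ord0) `&` T @^-1` cyl P T (fun j => w (lift ord0 j)).
Proof.
apply/seteqP; split => [x wx|x [x0 wTx] j].
  split=> [|j]; first exact: (wx ord0).
  by have := wx (lift ord0 j); rewrite lift0 -iterSr.
by case: (unliftP ord0 j) => [k ->|->] //; rewrite lift0 iterSr; exact: wTx.
Qed.

Lemma inverse_branch_cyl (g : I -> 'rV[R]_d -> 'rV[R]_d) :
  (forall i, inverse_branch T (P i) (g i)) ->
  forall n (w : 'I_n -> I), exists h, inverse_branch (iter n T) (cyl P T w) h.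
Proof.
move=> gB; elim=> [|n IH] w; first by exists id; rewrite cyl0; exact: inverse_branch_id.
have [h hB] := IH (fun j => w (lift ord0 j)).
exists (g (w ord0) \o h); rewrite cylS.
have -> : iter n.+1 T = iter n T \o T by apply/funext => x; rewrite iterSr.
exact: inverse_branch_comp.
Qed.

Lemma differentiable_iter n x :
  (forall j, (j < n)%N -> differentiable T (iter j T x)) -> differentiable (iter n T) x.
Proof.
elim: n => [|n IH] dT; first exact: ex_diff.
have -> : iter n.+1 T = T \o iter n T by [].
by apply: differentiable_comp; [apply: IH => j jn; apply: dT; exact: ltnW | exact: dT].
Qed.

Lemma differentiable_birk (tau : 'rV[R]_d -> R) n x :
  (forall j, (j < n)%N ->
     differentiable T (iter j T x) /\ differentiable tau (iter j T x)) ->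
  differentiable (birk T tau n) x.
Proof.
move=> dTtau; have -> : birk T tau n = \sum_(j < n) (tau \o iter j T).
  by apply/funext => z; rewrite fct_sumE.
apply: differentiable_sum => j.
apply: differentiable_comp; last by have [] := dTtau j (ltn_ord j).
by apply: differentiable_iter => k kj; have [] := dTtau k (ltn_trans kj (ltn_ord j)).
Qed.

End Cylinders.

Lemma le_of_no_line (R : realFieldType) (vT : vectType R) (F N : vT -> R) :
  (forall k u, F (k *: u) = `|k| * F u) -> (forall k u, N (k *: u) = `|k| * N u) ->
  ~ (exists L : {vspace vT}, (\dim L = 1)%N /\
       forall v, v \in L -> v != 0 -> N v < F v) ->
  forall u, F u <= N u.
Proof.
move=> FZ NZ noL u; have [->|u0] := eqVneq u 0.
  by rewrite -(scale0r 0) FZ NZ normr0 !mul0r.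
rewrite leNgt; apply/negP => NFu; apply: noL; exists <[u]>%VS.
split=> [|_ /vlineP[k ->] ku0]; first by rewrite dim_vline u0.
have k0 : k != 0 by apply: contraNneq ku0 => ->; rewrite scale0r.
by rewrite FZ NZ ltr_pM2l ?normr_gt0.
Qed.

Section Transversality.
Variables (R : realType) (d : nat) (T : 'rV[R]_d -> 'rV[R]_d) (tau : 'rV[R]_d -> R).
Variable n : nat.
Notation V := 'rV[R]_d.

Lemma Dn_cone_image (x a u : V) (C r : R) :
  'd (iter n T) x a = u -> `|r - 'd (birk T tau n) x a| <= C * enorm a ->
  (Dn T tau n x @` cone C) (row_mx u r%:M).
Proof.
move=> au ra; exists (row_mx a (r - 'd (birk T tau n) x a)%:M).
  by rewrite /cone /= (@row_mxKl _ 1 d 1) (@row_mxKr _ 1 d 1) mxE eqxx mulr1n.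
rewrite /Dn (@row_mxKl _ 1 d 1) (@row_mxKr _ 1 d 1) mxE eqxx mulr1n.
by rewrite au addrC subrK.
Qed.

Definition graph_space (c : 'cV[R]_d) : {vspace 'rV[R]_(d + 1)} :=
  limg (linfun (mulmxr (row_mx 1%:M c))).

Lemma graph_spaceE (c : 'cV[R]_d) (u : V) :
  linfun (mulmxr (row_mx 1%:M c)) u = row_mx u (lform c u)%:M.
Proof. by rewrite lfunE /= mul_mx_row mulmx1 [u *m c]mx11_scalar. Qed.

Lemma dim_graph_space (c : 'cV[R]_d) : \dim (graph_space c) = d.
Proof.
rewrite limg_dim_eq ?dimvf /dim /= ?mul1n // capfv; apply/eqP/lker0P => u v.
by rewrite !graph_spaceE => /eq_row_mx[].
Qed.

Lemma memv_graph_space (c : 'cV[R]_d) w :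
  w \in graph_space c -> exists u, w = row_mx u (lform c u)%:M.
Proof. by move=> /memv_imgP[u _ ->]; exists u; rewrite graph_spaceE. Qed.

Lemma not_transverse_of_le (x1 x2 : V) (C : R) (M1 M2 : {linear V -> V})
    (G1 G2 : {linear V -> R}) :
  (forall u, 'd (iter n T) x1 (M1 u) = u) -> (forall u, 'd (iter n T) x2 (M2 u) = u) ->
  (forall u, G1 u = 'd (birk T tau n) x1 (M1 u)) ->
  (forall u, G2 u = 'd (birk T tau n) x2 (M2 u)) ->
  (forall u, `|G1 u - G2 u| <= C * (enorm (M1 u) + enorm (M2 u))) ->
  ~ transverse T tau n C x1 x2.
Proof.
move=> M1K M2K G1E G2E G12 noS; apply: noS.
have [c cG] : exists c, forall u, `|lform c u - G1 u| <= C * enorm (M1 u) /\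
                                  `|lform c u - G2 u| <= C * enorm (M2 u).
  have [g1 g1E] := lform_of_linear G1; have [g2 g2E] := lform_of_linear G2.
  have [C0|Cneg] := leP 0 C.
    pose p (M : {linear V -> V}) u := C * enorm (M u).
    have pD M u v : p M (u + v) <= p M u + p M v.
      by rewrite /p linearD -mulrDr ler_wpM2l // enormD.
    have pZ M a u : p M (a *: u) = `|a| * p M u by rewrite /p linearZ enormZ mulrCA.
    have [|c cg] := sandwich (pD M1) (pZ M1) (pD M2) (pZ M2) (g1 := g1) (g2 := g2).
      by move=> u; rewrite -g1E -g2E -mulrDr.
    by exists c => u; rewrite g1E g2E.
  (* for [C < 0] the bound only holds on the zero space *)
  exists 0 => u; suff -> : u = 0 by rewrite !linear0 lformr0 addr0 normr0 enorm0 mulr0.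
  have M1u0 : enorm (M1 u) = 0.
    apply/le_anti/andP; split; last exact: enorm_ge0.
    have := G12 u; have := enorm_ge0 (M2 u); have := normr_ge0 (G1 u - G2 u); nra.
  by rewrite -(M1K u) (enorm_eq0 M1u0) linear0.
exists (graph_space c); split=> [|_ /memv_graph_space[u ->]]; first exact: dim_graph_space.
have [cG1 cG2] := cG u.
by split; [apply: Dn_cone_image (M1K u) _; rewrite -G1E
          | apply: Dn_cone_image (M2K u) _; rewrite -G2E].
Qed.

Lemma transverse_line (x1 x2 : V) (C : R) (M1 M2 : {linear V -> V})
    (G1 G2 : {linear V -> R}) :
  (forall u, 'd (iter n T) x1 (M1 u) = u) -> (forall u, 'd (iter n T) x2 (M2 u) = u) ->
  (forall u, G1 u = 'd (birk T tau n) x1 (M1 u)) ->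
  (forall u, G2 u = 'd (birk T tau n) x2 (M2 u)) ->
  transverse T tau n C x1 x2 ->
  exists L : {vspace V}, (\dim L = 1)%N /\
    forall v, v \in L -> v != 0 -> `|G1 v - G2 v| > C * (enorm (M1 v) + enorm (M2 v)).
Proof.
move=> M1K M2K G1E G2E tr; apply: contrapT => noL.
apply: (not_transverse_of_le M1K M2K G1E G2E _ tr).
apply: le_of_no_line noL => [k u|k u].
- by rewrite (linearZZ G1) (linearZZ G2) -mulrBr normrM.
- by rewrite (linearZZ M1) (linearZZ M2) !enormZ -mulrDr mulrCA.
Qed.

End Transversality.

Section BranchDerivatives.
Variables (R : realType) (d : nat) (I : finType) (P : I -> set 'rV[R]_d).
Variables (T : 'rV[R]_d -> 'rV[R]_d) (tau : 'rV[R]_d -> R) (g : I -> 'rV[R]_d -> 'rV[R]_d).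
Hypotheses (dTtau : forall i x, P i x -> differentiable T x /\ differentiable tau x)
  (gB : forall i, inverse_branch T (P i) (g i)).
Variables (n : nat) (w : 'I_n -> I) (l : 'rV[R]_d -> 'rV[R]_d).
Hypothesis lK : forall z, (iter n T @` cyl P T w) z ->
  cyl P T w (l z) /\ iter n T (l z) = z.

Lemma branch_derivatives y : (iter n T @` cyl P T w) y ->
  (forall u, 'd (iter n T) (l y) ('d l y u) = u) /\
  (forall u, 'd (birk T tau n \o l) y u = 'd (birk T tau n) (l y) ('d l y u)).
Proof.
move=> wy; have [wly _] := lK wy.
have dTtau_iter j : (j < n)%N ->
    differentiable T (iter j T (l y)) /\ differentiable tau (iter j T (l y)).
  by move=> jn; apply: (dTtau (wly (Ordinal jn))).
have [h hB] := inverse_branch_cyl gB w.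
have dTn : differentiable (iter n T) (l y).
  by apply: differentiable_iter => j /dTtau_iter[].
have dB : differentiable (birk T tau n) (l y) by exact: differentiable_birk.
have [dl dTl] := inverse_branch_section hB lK wy dTn.
by split=> // u; have /(congr1 (fun f => f u)) := diff_comp dl dB.
Qed.

End BranchDerivatives.

Theorem lemma3p7 (R : realType) (d : nat) (X : set 'rV[R]_d)
  (T : 'rV[R]_d -> 'rV[R]_d) (tau : 'rV[R]_d -> R) (lam alpha C3 : R)
  (I : finType) (P : I -> set 'rV[R]_d) :
  setting X T tau lam alpha C3 P ->
  let C5 := 2 * C3 / (1 - expR (- lam)) in
  forall (n : nat) (om up : 'I_n -> I) (l_om l_up : 'rV[R]_d -> 'rV[R]_d),
  (* l_om = (T^n restricted to omega)^{-1} on T^n omega, likewise l_up *)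
  (forall y, (iter n T @` cyl P T om) y ->
     cyl P T om (l_om y) /\ iter n T (l_om y) = y) ->
  (forall y, (iter n T @` cyl P T up) y ->
     cyl P T up (l_up y) /\ iter n T (l_up y) = y) ->
  forall y : 'rV[R]_d,
  (iter n T @` cyl P T om) y -> (iter n T @` cyl P T up) y ->
  transverse T tau n C5 (l_om y) (l_up y) ->
  exists L : {vspace 'rV[R]_d}, (\dim L = 1)%N /\
    forall v, v \in L -> v != 0 ->
      `|'d (birk T tau n \o l_om) y v - 'd (birk T tau n \o l_up) y v|
        > C5 * (enorm ('d l_om y v) + enorm ('d l_up y v)).
Proof.
move=> [[_ [PX _ _] Tbranch _] [[_ _ dtau _] _]] C5 n om up l_om l_up omK upK y
  y_om y_up tr.
have dTtau i x : P i x -> differentiable T x /\ differentiable tau x.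
  have [_ _ [dT _] _] := Tbranch i; have [_ [_ PiX]] := PX i.
  by move=> Px; split; [exact: dT | exact/dtau/PiX].
have [g gB] : {g : I -> 'rV_d -> 'rV_d & forall i, inverse_branch T (P i) (g i)}.
  apply: (@choice _ _ (fun i gi => inverse_branch T (P i) gi)) => i.
  have [oTP _ _ [gi [giK [dgi _]]]] := Tbranch i.
  by exists gi; split.
have [M1K G1E] := branch_derivatives dTtau gB omK y_om.
have [M2K G2E] := branch_derivatives dTtau gB upK y_up.
exact: transverse_line M1K M2K G1E G2E tr.
Qed.
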